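(* Suppose the splitting condition $\sum_{j=1}^mP_jv=v$ for all $v\in H_0$ holds. Then for every $x\in H$ with $\langle x,R_0x\rangle>0$ and every $n\ge0$, $\mathbb E_{\nu_x}[M_n]\le(1-1/m)^n\langle x,R_0x\rangle$, and $\langle x,R_\infty(\omega)x\rangle=0$ for $\nu_x$-almost every $\omega$.
   Context: Let $H$ be a complex Hilbert space, $m\ge2$, $P_1,\dots,P_m$ orthogonal projections on $H$, $R_0\in B(H)_+$, and $H_0=\overline{\mathrm{ran}}(R_0^{1/2})$. Let $\mathcal A=\{1,\dots,m\}$, $\mathcal W$ the set of finite words over $\mathcal A$ (including the empty word $\emptyset$); for nonempty $w=j_1\cdots j_n$, $w^-=j_1\cdots j_{n-1}$, and $wj$ is concatenation. WR energy tree: $R_\emptyset=R_0$, and for $w=j_1\cdots j_n$, $n\ge1$, $R_w=R_{w^-}^{1/2}(I-P_{j_n})R_{w^-}^{1/2}$, $D_w=R_{w^-}^{1/2}P_{j_n}R_{w^-}^{1/2}$. $\Omega=\mathcal A^{\mathbb N}$; for $\omega=(j_1,j_2,\dots)$, $\omega|_n=j_1\cdots j_n$, $\omega|_0=\emptyset$; cylinders $[w]=\{\omega:\omega|_{|w|}=w\}$. $R_\infty(\omega)$ is the strong limit of the Loewner-decreasing sequence $R_{\omega|_n}$. $M_n(\omega)=\langle x,R_{\omega|_n}x\rangle$. Energy-biased path measure: with $x$ fixed, $a_{wj}=\langle x,D_{wj}x\rangle$, a fixed probability vector $q$ on $\mathcal A$, $p_x(j\mid w)=a_{wj}/\sum_k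 a_{wk}$ if $\sum_ka_{wk}>0$ and $p_x(j\mid w)=q_j$ otherwise; $\nu_x$ is the unique Borel probability measure on $\Omega$ with $\nu_x([j_1\cdots j_n])=\prod_{i=1}^n p_x(j_i\mid j_1\cdots j_{i-1})$. *)

From HB Require Import structures.
From mathcomp Require Import all_boot all_order all_algebra.
From mathcomp Require Import all_classical all_reals all_analysis.
From mathcomp Require Import complex.
From Stdlib Require Import ClassicalEpsilon.

Set Implicit Arguments.
Unset Strict Implicit.
Unset Printing Implicit Defensive.

Import Order.TTheory GRing.Theory Num.Theory.
Local Open Scope ring_scope.
Local Open Scope classical_set_scope.

Section HilbertDefs.
Variable R : realType.
Local Notation C := R[i].
Variable H : lmodType C.
(* inner product, linear in the second argument, conjugate-linear in the first *)
Variable ip : H -> H -> C.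

Definition is_inner_product : Prop :=
  [/\ (forall x y z : H, ip x (y + z) = ip x y + ip x z),
      (forall (x y : H) (a : C), ip x (a *: y) = a * ip x y),
      (forall x y : H, ip y x = (ip x y)^*),
      (forall x : H, 0 <= ip x x) &
      (forall x : H, ip x x = 0 -> x = 0)].

Definition hnorm (x : H) : R := Num.sqrt (complex.Re (ip x x)).

Definition hcvg_to (u : nat -> H) (y : H) : Prop :=
  forall e : R, 0 < e -> exists N : nat, forall n : nat, (N <= n)%N -> hnorm (u n - y) < e.

Definition hcauchy (u : nat -> H) : Prop :=
  forall e : R, 0 < e -> exists N : nat, forall n k : nat,
    (N <= n)%N -> (N <= k)%N -> hnorm (u n - u k) < e.

Definition hilbert : Prop :=
  is_inner_product /\ forall u : nat -> H, hcauchy u -> exists y, hcvg_to u y.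

Definition bounded_op (T : H -> H) : Prop :=
  (forall (a : C) (x y : H), T (a *: x + y) = a *: T x + T y) /\
  exists c : R, forall x : H, hnorm (T x) <= c * hnorm x.

Definition orth_proj (P : H -> H) : Prop :=
  [/\ bounded_op P, (forall x, P (P x) = P x) & (forall x y, ip (P x) y = ip x (P y))].

Definition positive_op (T : H -> H) : Prop :=
  bounded_op T /\ forall x : H, 0 <= ip x (T x).

Definition op_sqrt (T : H -> H) : H -> H :=
  epsilon (inhabits (fun x : H => x))
    (fun S : H -> H => positive_op S /\ forall x, S (S x) = T x).

(* real quadratic form <x, T x> (real for positive T) *)
Definition qf (x : H) (T : H -> H) : R := complex.Re (ip x (T x)).

(* H_0 = closure of ran(R_0^{1/2}) *)
Definition in_H0 (R0 : H -> H) (v : H) : Prop :=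
  forall e : R, 0 < e -> exists y : H, hnorm (v - op_sqrt R0 y) < e.

Variable m : nat.
Variable P : 'I_m -> H -> H.
Variable R0 : H -> H.

Definition tree_step (Rw : H -> H) (j : 'I_m) : H -> H :=
  fun v => op_sqrt Rw (op_sqrt Rw v - P j (op_sqrt Rw v)).

(* R_w for a finite word w (letters are in 'I_m, i.e. A = {1..m} shifted) *)
Definition treeR (w : seq 'I_m) : H -> H := foldl tree_step R0 w.

Definition treeD (w : seq 'I_m) (j : 'I_m) : H -> H :=
  fun v => op_sqrt (treeR w) (P j (op_sqrt (treeR w) v)).

Variable q : 'I_m -> R.
Variable x : H.

Definition energy_a (w : seq 'I_m) (j : 'I_m) : R := qf x (treeD w j).

Definition trans_prob (w : seq 'I_m) (j : 'I_m) : R :=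
  let s := \sum_(k < m) energy_a w k in
  if 0 < s then energy_a w j / s else q j.

(* prod_{i=1}^n p_x(j_i | j_1 ... j_{i-1}) where pre is the already-read prefix *)
Fixpoint path_prob_from (pre w : seq 'I_m) : R :=
  match w with
  | [::] => 1
  | j :: w' => trans_prob pre j * path_prob_from (rcons pre j) w'
  end.

Definition path_prob (w : seq 'I_m) : R := path_prob_from [::] w.

End HilbertDefs.

(* 'I_n.+1 is inhabited; needed for the path space to be a measurableType *)
HB.instance Definition _ (n : nat) := isPointed.Build 'I_n.+1 ord0.

Definition prefix (m : nat) (om : nat -> 'I_m) (n : nat) : seq 'I_m := mkseq om n.

Definition cyl (m : nat) (w : seq 'I_m) : set (nat -> 'I_m) :=
  [set om | prefix om (size w) = w].

Definition cylinders (m : nat) : set (set (nat -> 'I_m)) := range (@cyl m).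

(* the alphabet is 'I_n.+1 (m = n.+1 letters); the successor form makes the
   path space a pointedType, as required for a measurableType *)
Notation Omega n := (g_sigma_algebraType (@cylinders n.+1)).

Section PathDefs.
Variable R : realType.
Variable H : lmodType R[i].
Variable ip : H -> H -> R[i].
Variable n : nat.
Local Notation m := n.+1.
Variable P : 'I_m -> H -> H.
Variable R0 : H -> H.

Definition Rinf (om : nat -> 'I_m) : H -> H :=
  fun y => epsilon (inhabits (0 : H))
    (fun z => hcvg_to ip (fun n => treeR ip P R0 (prefix om n) y) z).

Definition Mn (x : H) (k : nat) (om : Omega n) : R :=
  qf ip x (treeR ip P R0 (prefix om k)).
End PathDefs.

(* For every word w the energies a_{wj} = |P_j R_w^{1/2} x|^2 add up to
   M_w = <x, R_w x>: the defect sum_j P_j - I is self-adjoint and vanishes on H_0,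
   so it is killed by R_0^{1/2}, hence by every R_w^{1/2} because R_w <= R_0.
   Since M_{wj} = M_w - a_{wj} and the walk steps to wj with probability
   a_{wj} / M_w, the next energy has conditional mean
   M_w - sum_j a_{wj}^2 / M_w <= (1 - 1/m) M_w by Cauchy-Schwarz, which gives the
   geometric bound on E[M_n].  By Markov's inequality, for each p the paths on
   which M_n stays above 1/(p+1) form a null set; off their union the decreasing
   sequence M_n tends to 0, and |R_{om|n} x|^2 <= |R_0| M_n then forces
   R_{om|n} x -> 0, i.e. <x, R_oo(om) x> = 0.
   The square roots R_w^{1/2}, which the definitions pick by choice, exist by the
   classical iteration X_{N+1} = (B + X_N^2) / 2 with B = I - A / k, k > |A|. *)

From Pilot Require Import Defs.
From HB Require Import structures.
From mathcomp Require Import all_boot all_order all_algebra.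
From mathcomp Require Import all_classical all_reals all_analysis.
From mathcomp Require Import complex ring lra.
From Stdlib Require Import ClassicalEpsilon.

Set Implicit Arguments.
Unset Strict Implicit.
Unset Printing Implicit Defensive.

Import Order.TTheory GRing.Theory Num.Theory.
Local Open Scope ring_scope.

Local Notation Re := complex.Re.
Local Notation Im := complex.Im.

(** * Complex numbers and inner products *)

Section ComplexParts.
Variable R : realType.
Implicit Types (z w : R[i]) (t : R).

Lemma complex_ext z w : Re z = Re w -> Im z = Im w -> z = w.
Proof. by case: z; case: w => ? ? ? ? /= -> ->. Qed.
Lemma ReD z w : Re (z + w) = Re z + Re w. Proof. by case: z; case: w. Qed.
Lemma ImD z w : Im (z + w) = Im z + Im w. Proof. by case: z; case: w. Qed.
Lemma ReN z : Re (- z) = - Re z. Proof. by case: z. Qed.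
Lemma ImN z : Im (- z) = - Im z. Proof. by case: z. Qed.
Lemma ReB z w : Re (z - w) = Re z - Re w. Proof. by rewrite ReD ReN. Qed.
Lemma ImB z w : Im (z - w) = Im z - Im w. Proof. by rewrite ImD ImN. Qed.
Lemma ReJ z : Re z^* = Re z. Proof. by case: z. Qed.
Lemma ImJ z : Im z^* = - Im z. Proof. by case: z. Qed.
Lemma conj_real t : (t%:C%C)^* = t%:C%C.
Proof. by apply: complex_ext; rewrite ?ReJ ?ImJ //= oppr0. Qed.
Lemma real_complexM s t : ((s * t)%:C%C : R[i]) = s%:C%C * t%:C%C.
Proof. exact: rmorphM. Qed.
Lemma Re_realM t z : Re (t%:C%C * z) = t * Re z.
Proof. by case: z => a b /=; rewrite mul0r subr0. Qed.
Lemma Im_realM t z : Im (t%:C%C * z) = t * Im z.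
Proof. by case: z => a b /=; rewrite mul0r addr0. Qed.
Lemma Im_iM z : Im ('i%C * z) = Re z.
Proof. by case: z => a b /=; rewrite !mul0r !mul1r add0r. Qed.
Lemma Re_conjiM z : Re (('i%C)^* * z) = Im z.
Proof. by case: z => a b /=; rewrite mul0r mulN1r sub0r opprK. Qed.
Lemma Im_conjiM z : Im (('i%C)^* * z) = - Re z.
Proof. by case: z => a b /=; lra. Qed.
Lemma conjiMi : ('i%C)^* * 'i%C = 1 :> R[i].
Proof. by apply/eqP; rewrite eq_complex /= !mul0r; apply/andP; split; apply/eqP; lra. Qed.

Lemma complex_ge0E z : (0 <= z) = (Im z == 0) && (0 <= Re z).
Proof. by rewrite lecE eq_sym. Qed.
Lemma complex_realE z : Im z = 0 -> z = (Re z)%:C%C.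
Proof. by case: z => a b /= ->. Qed.

Lemma Re_sum (I : Type) (s : seq I) (P : pred I) (F : I -> R[i]) :
  Re (\sum_(i <- s | P i) F i) = \sum_(i <- s | P i) Re (F i).
Proof. exact: (big_morph _ ReD). Qed.
Lemma Im_sum (I : Type) (s : seq I) (P : pred I) (F : I -> R[i]) :
  Im (\sum_(i <- s | P i) F i) = \sum_(i <- s | P i) Im (F i).
Proof. exact: (big_morph _ ImD). Qed.
End ComplexParts.

Lemma sqr_le_of_quadratic_ge0 (R : realFieldType) (a b c : R) : 0 <= c ->
  (forall t, 0 <= a + 2 * b * t + c * t ^+ 2) -> b ^+ 2 <= a * c.
Proof.
move=> c_ge0 quad_ge0.
have [c0|c_neq0] := eqVneq c 0.
  have [b0|b_neq0] := eqVneq b 0; first by rewrite b0 c0 expr0n mulr0.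
  have := quad_ge0 (- (a + 1) / (2 * b)).
  suff -> : a + 2 * b * (- (a + 1) / (2 * b)) + c * (- (a + 1) / (2 * b)) ^+ 2 = -1.
    by rewrite ler0N1.
  by rewrite c0; field; rewrite b_neq0.
have c_gt0 : 0 < c by rewrite lt_def c_neq0.
have := quad_ge0 (- b / c).
have -> : a + 2 * b * (- b / c) + c * (- b / c) ^+ 2 = (a * c - b ^+ 2) / c by field.
by rewrite pmulr_lge0 ?invr_gt0 // subr_ge0.
Qed.

Section InnerProduct.
Variable R : realType.
Variable H : lmodType R[i].
Variable ip : H -> H -> R[i].
Hypothesis ip_inner : is_inner_product ip.
Implicit Types (x y z : H) (t : R).

Lemma ipDr x y z : ip x (y + z) = ip x y + ip x z. Proof. by case: ip_inner. Qed.
Lemma ipZr x y a : ip x (a *: y) = a * ip x y. Proof. by case: ip_inner. Qed.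
Lemma ipC x y : ip y x = (ip x y)^*. Proof. by case: ip_inner. Qed.
Lemma ip_ge0 x : 0 <= ip x x. Proof. by case: ip_inner. Qed.
Lemma ip_eq0 x : ip x x = 0 -> x = 0. Proof. by case: ip_inner => _ _ _ _; apply. Qed.

Lemma ip0r x : ip x 0 = 0.
Proof. by apply: (addrI (ip x 0)); rewrite -ipDr !addr0. Qed.
Lemma ipNr x y : ip x (- y) = - ip x y.
Proof. by rewrite -scaleN1r ipZr mulN1r. Qed.
Lemma ipBr x y z : ip x (y - z) = ip x y - ip x z.
Proof. by rewrite ipDr ipNr. Qed.
Lemma ipDl x y z : ip (y + z) x = ip y x + ip z x.
Proof. by rewrite ipC ipDr rmorphD; congr (_ + _); rewrite [RHS]ipC. Qed.
Lemma ipZl x y a : ip (a *: y) x = a^* * ip y x.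
Proof. by rewrite ipC ipZr rmorphM; congr (_ * _); rewrite [RHS]ipC. Qed.
Lemma ip0l x : ip 0 x = 0.
Proof. by rewrite ipC ip0r rmorph0. Qed.
Lemma ipNl x y : ip (- y) x = - ip y x.
Proof. by rewrite ipC ipNr rmorphN; congr (- _); rewrite [RHS]ipC. Qed.
Lemma ipBl x y z : ip (y - z) x = ip y x - ip z x.
Proof. by rewrite ipDl ipNl. Qed.
Lemma ip_sumr x (I : Type) (s : seq I) (P : pred I) (F : I -> H) :
  ip x (\sum_(i <- s | P i) F i) = \sum_(i <- s | P i) ip x (F i).
Proof. exact: (big_morph _ (ipDr x) (ip0r x)). Qed.
Lemma ip_suml x (I : Type) (s : seq I) (P : pred I) (F : I -> H) :
  ip (\sum_(i <- s | P i) F i) x = \sum_(i <- s | P i) ip (F i) x.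
Proof. exact: (big_morph _ (fun a b => ipDl x a b) (ip0l x)). Qed.

Definition rip x y : R := Re (ip x y).
Definition sqnorm x : R := rip x x.

Lemma Im_ipxx x : Im (ip x x) = 0.
Proof. by have := ip_ge0 x; rewrite complex_ge0E => /andP[/eqP]. Qed.
Lemma sqnorm_ge0 x : 0 <= sqnorm x.
Proof. by have := ip_ge0 x; rewrite complex_ge0E => /andP[]. Qed.
Lemma ipxxE x : ip x x = (sqnorm x)%:C%C.
Proof. exact: complex_realE (Im_ipxx x). Qed.
Lemma sqnorm_eq0 x : sqnorm x = 0 -> x = 0.
Proof. by move=> h; apply: ip_eq0; rewrite ipxxE h. Qed.
Lemma Im_ipE y z : Im (ip y z) = rip ('i%C *: y) z.
Proof. by rewrite /rip ipZl Re_conjiM. Qed.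

Lemma ripC x y : rip x y = rip y x. Proof. by rewrite /rip ipC ReJ. Qed.
Lemma ripDr x y z : rip x (y + z) = rip x y + rip x z. Proof. by rewrite /rip ipDr ReD. Qed.
Lemma ripDl x y z : rip (y + z) x = rip y x + rip z x. Proof. by rewrite /rip ipDl ReD. Qed.
Lemma ripNr x y : rip x (- y) = - rip x y. Proof. by rewrite /rip ipNr ReN. Qed.
Lemma ripNl x y : rip (- y) x = - rip y x. Proof. by rewrite /rip ipNl ReN. Qed.
Lemma ripBr x y z : rip x (y - z) = rip x y - rip x z. Proof. by rewrite /rip ipBr ReB. Qed.
Lemma ripZr x y t : rip x (t%:C%C *: y) = t * rip x y. Proof. by rewrite /rip ipZr Re_realM. Qed.
Lemma ripZl x y t : rip (t%:C%C *: y) x = t * rip y x.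
Proof. by rewrite /rip ipZl conj_real Re_realM. Qed.
Lemma rip0r x : rip x 0 = 0. Proof. by rewrite /rip ip0r. Qed.

Lemma sqnormD x y : sqnorm (x + y) = sqnorm x + 2 * rip x y + sqnorm y.
Proof. by rewrite /sqnorm ripDl !ripDr (ripC y x); ring. Qed.
Lemma sqnormN x : sqnorm (- x) = sqnorm x.
Proof. by rewrite /sqnorm ripNl ripNr opprK. Qed.
Lemma sqnormZ a x : sqnorm (a *: x) = (Re a ^+ 2 + Im a ^+ 2) * sqnorm x.
Proof.
rewrite /sqnorm /rip ipZl ipZr mulrA ipxxE mulrC Re_realM mulrC; congr (_ * _).
by case: a => p q /=; ring.
Qed.

Definition linear_op (T : H -> H) := forall a x y, T (a *: x + y) = a *: T x + T y.
Definition selfadjoint (T : H -> H) := forall x y, ip (T x) y = ip x (T y).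

Section LinearOp.
Variable T : H -> H.
Hypothesis T_lin : linear_op T.

Lemma linop0 : T 0 = 0.
Proof.
have := T_lin 1 0 0; rewrite scale1r !addr0 scale1r => T00.
by apply: (addrI (T 0)); rewrite addr0 -T00.
Qed.
Lemma linopD x y : T (x + y) = T x + T y.
Proof. by have := T_lin 1 x y; rewrite !scale1r. Qed.
Lemma linopZ a x : T (a *: x) = a *: T x.
Proof. by have := T_lin a x 0; rewrite !addr0 linop0 addr0. Qed.
Lemma linopN x : T (- x) = - T x.
Proof. by rewrite -scaleN1r linopZ scaleN1r. Qed.
Lemma linopB x y : T (x - y) = T x - T y.
Proof. by rewrite linopD linopN. Qed.
Lemma linop_sum (I : Type) (s : seq I) (P : pred I) (F : I -> H) :
  T (\sum_(i <- s | P i) F i) = \sum_(i <- s | P i) T (F i).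
Proof. exact: (big_morph _ linopD linop0). Qed.
End LinearOp.

Lemma cauchy_schwarz_op T : linear_op T -> selfadjoint T ->
  (forall v, 0 <= rip v (T v)) ->
  forall u v, rip u (T v) ^+ 2 <= rip u (T u) * rip v (T v).
Proof.
move=> T_lin T_sa T_pos u v.
have sym : rip v (T u) = rip u (T v) by rewrite /rip -T_sa ipC ReJ.
apply: sqr_le_of_quadratic_ge0 => [|t]; first exact: T_pos.
have := T_pos (u + t%:C%C *: v).
rewrite (linopD T_lin) (linopZ T_lin) ripDl !ripDr !ripZl !ripZr sym.
by congr (0 <= _); ring.
Qed.

Lemma cauchy_schwarz u v : rip u v ^+ 2 <= sqnorm u * sqnorm v.
Proof. by apply: (@cauchy_schwarz_op id) => // w; apply: sqnorm_ge0. Qed.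

Lemma hnormE x : hnorm ip x = Num.sqrt (sqnorm x). Proof. by []. Qed.
Lemma hnorm_ge0 x : 0 <= hnorm ip x. Proof. exact: sqrtr_ge0. Qed.
Lemma sqr_hnorm x : hnorm ip x ^+ 2 = sqnorm x.
Proof. by rewrite sqr_sqrtr // sqnorm_ge0. Qed.

Lemma norm_rip_le u v : `|rip u v| <= hnorm ip u * hnorm ip v.
Proof.
rewrite -sqrtr_sqr !hnormE -sqrtrM ?sqnorm_ge0 //.
by rewrite ler_sqrt ?cauchy_schwarz // mulr_ge0 ?sqnorm_ge0.
Qed.
Lemma rip_le u v : rip u v <= hnorm ip u * hnorm ip v.
Proof. exact: le_trans (ler_norm _) (norm_rip_le u v). Qed.

Lemma ler_hnormD x y : hnorm ip (x + y) <= hnorm ip x + hnorm ip y.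
Proof.
rewrite -(ger0_norm (addr_ge0 (hnorm_ge0 x) (hnorm_ge0 y))) -sqrtr_sqr hnormE.
rewrite ler_sqrt ?sqr_ge0 // sqnormD sqrrD !sqr_hnorm lerD2r lerD2l.
by have := rip_le x y; rewrite -mulr_natr; lra.
Qed.
Lemma hnorm0 : hnorm ip 0 = 0. Proof. by rewrite hnormE /sqnorm rip0r sqrtr0. Qed.
Lemma hnorm_opp x : hnorm ip (- x) = hnorm ip x. Proof. by rewrite !hnormE sqnormN. Qed.
Lemma hnorm_distC x y : hnorm ip (x - y) = hnorm ip (y - x). Proof. by rewrite -hnorm_opp opprB. Qed.
Lemma hnormZ a x : hnorm ip (a *: x) = Num.sqrt (Re a ^+ 2 + Im a ^+ 2) * hnorm ip x.
Proof. by rewrite !hnormE sqnormZ sqrtrM // addr_ge0 ?sqr_ge0. Qed.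
Lemma hnormZ_real t x : hnorm ip (t%:C%C *: x) = `|t| * hnorm ip x.
Proof. by rewrite hnormZ /= expr0n addr0 sqrtr_sqr. Qed.
Lemma hnorm_eq0 x : hnorm ip x = 0 -> x = 0.
Proof.
move=> /eqP; rewrite sqrtr_eq0 => h; apply: sqnorm_eq0.
by apply/eqP; rewrite eq_le h sqnorm_ge0.
Qed.
Lemma hnorm_sum (I : Type) (s : seq I) (P : pred I) (F : I -> H) :
  hnorm ip (\sum_(i <- s | P i) F i) <= \sum_(i <- s | P i) hnorm ip (F i).
Proof.
elim: s => [|a s IH]; first by rewrite !big_nil hnorm0.
rewrite !big_cons; case: (P a) => //.
by apply: le_trans (ler_hnormD _ _) _; rewrite lerD2l.
Qed.

Lemma hnorm_triangle a b u : hnorm ip (a - b) <= hnorm ip (a - u) + hnorm ip (u - b).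
Proof. by have := ler_hnormD (a - u) (u - b); rewrite addrA subrK. Qed.

Lemma hcvg_uniq u a b : hcvg_to ip u a -> hcvg_to ip u b -> a = b.
Proof.
move=> ua ub; apply/eqP; rewrite -subr_eq0; apply/eqP; apply: hnorm_eq0.
apply/eqP; rewrite eq_le hnorm_ge0 andbT; apply/ler_addgt0Pr => e e_gt0.
have e2_gt0 : 0 < e / 2 by rewrite divr_gt0.
have [N1 h1] := ua _ e2_gt0; have [N2 h2] := ub _ e2_gt0.
have := h1 _ (leq_maxl N1 N2); have := h2 _ (leq_maxr N1 N2).
have := hnorm_triangle a b (u (maxn N1 N2)).
rewrite [hnorm ip (a - u _)]hnorm_distC; lra.
Qed.

Lemma hcvg_lipschitz (T : H -> H) (K : R) u a :
  (forall z w, hnorm ip (T z - T w) <= K * hnorm ip (z - w)) ->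
  hcvg_to ip u a -> hcvg_to ip (fun n => T (u n)) (T a).
Proof.
move=> T_lip ua e e_gt0.
have K1_gt0 : 0 < `|K| + 1 by rewrite ltr_wpDl.
have [N hN] := ua _ (divr_gt0 e_gt0 K1_gt0).
exists N => k /hN uk; apply: le_lt_trans (T_lip _ _) _.
apply: le_lt_trans (_ : (`|K| + 1) * hnorm ip (u k - a) < _).
  by apply: ler_wpM2r; [exact: hnorm_ge0 | have := ler_norm K; lra].
by rewrite mulrC -ltr_pdivlMr.
Qed.

Lemma hcvgD u v a b : hcvg_to ip u a -> hcvg_to ip v b ->
  hcvg_to ip (fun n => u n + v n) (a + b).
Proof.
move=> ua vb e e_gt0.
have e2_gt0 : 0 < e / 2 by rewrite divr_gt0.
have [N1 h1] := ua _ e2_gt0; have [N2 h2] := vb _ e2_gt0.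
exists (maxn N1 N2) => k; rewrite geq_max => /andP[k1 k2].
have := h1 k k1; have := h2 k k2.
have := ler_hnormD (u k - a) (v k - b); rewrite addrACA -opprD; lra.
Qed.

Lemma hcvgZ (c : R[i]) u a : hcvg_to ip u a -> hcvg_to ip (fun n => c *: u n) (c *: a).
Proof. by apply: (hcvg_lipschitz (K := Num.sqrt (Re c ^+ 2 + Im c ^+ 2))) => z w; rewrite -scalerBr hnormZ. Qed.

Lemma hcvg_cst a : hcvg_to ip (fun=> a) a.
Proof. by move=> e e_gt0; exists 0%N => k _; rewrite subrr hnorm0. Qed.

Lemma hcvg_shift u a : hcvg_to ip u a -> hcvg_to ip (fun n => u n.+1) a.
Proof. by move=> ua e /ua[N hN]; exists N => k /leqW /hN. Qed.

Lemma hcvg_hnorm_le u a r : (forall n, hnorm ip (u n) <= r) -> hcvg_to ip u a ->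
  hnorm ip a <= r.
Proof.
move=> u_le ua; apply/ler_addgt0Pr => e /ua[N /(_ N (leqnn N))].
have := ler_hnormD (u N) (a - u N); rewrite addrC subrK hnorm_distC.
by have := u_le N; lra.
Qed.

Lemma hcvg_rip_le y u a r : (forall n, rip y (u n) <= r) -> hcvg_to ip u a ->
  rip y a <= r.
Proof.
move=> u_le ua; apply/ler_addgt0Pr => e e_gt0.
have y1_gt0 : 0 < hnorm ip y + 1 by rewrite ltr_wpDl ?hnorm_ge0.
have [N /(_ N (leqnn N)) close] := ua _ (divr_gt0 e_gt0 y1_gt0).
have -> : a = u N - (u N - a) by rewrite opprB addrC subrK.
rewrite ripBr; have := u_le N; have := ler_norm (- rip y (u N - a)); rewrite normrN.
have := norm_rip_le y (u N - a); rewrite ltr_pdivlMr // in close.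
have := hnorm_ge0 (u N - a); have := hnorm_ge0 y; nra.
Qed.
End InnerProduct.

(** * Positive square roots *)

Section SquareRoot.
Variable R : realType.
Variable H : lmodType R[i].
Variable ip : H -> H -> R[i].
Hypothesis ip_inner : is_inner_product ip.
Hypothesis H_complete : forall u : nat -> H, hcauchy ip u -> exists y, hcvg_to ip u y.
Local Notation rip := (rip ip).
Local Notation sqnorm := (sqnorm ip).
Local Notation hnorm := (hnorm ip).
Implicit Types (x y z : H) (t : R).

(* Polarization: for a complex inner product, positivity alone forces self-adjointness. *)
Lemma positive_selfadjoint T : linear_op T -> (forall x, 0 <= ip x (T x)) -> selfadjoint ip T.
Proof.
move=> T_lin T_pos x y.
have ImT0 z : Im (ip z (T z)) = 0.
  by have := T_pos z; rewrite complex_ge0E => /andP[/eqP].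
have ImE : Im (ip x (T y)) + Im (ip y (T x)) = 0.
  have := ImT0 (x + y).
  by rewrite (linopD T_lin) !(ipDl ip_inner) !(ipDr ip_inner) !ImD !ImT0; lra.
have ReE : Re (ip x (T y)) - Re (ip y (T x)) = 0.
  have := ImT0 (x + 'i%C *: y).
  rewrite (linopD T_lin) (linopZ T_lin) !(ipDl ip_inner) !(ipDr ip_inner).
  rewrite !(ipZl ip_inner) !(ipZr ip_inner) !ImD !ImT0 Im_iM Im_conjiM mulrA conjiMi mul1r ImT0.
  lra.
by apply: complex_ext; rewrite (ipC ip_inner) ?ReJ ?ImJ; lra.
Qed.

Lemma selfadjoint_Im_ip T : selfadjoint ip T -> forall y, Im (ip y (T y)) = 0.
Proof.
move=> T_sa y; have : ip y (T y) = (ip y (T y))^* by rewrite -(ipC ip_inner) T_sa.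
by move/(congr1 (@complex.Im R)); rewrite ImJ; lra.
Qed.

Section OfOperator.
Variable A : H -> H.
Hypothesis A_lin : linear_op A.
Hypothesis A_pos : forall x, 0 <= ip x (A x).
Variable c : R.
Hypothesis A_bounded : forall y, hnorm (A y) <= c * hnorm y.

Let k := `|c| + 1.
Let k_gt0 : 0 < k. Proof. by rewrite ltr_wpDl. Qed.
Let A_sa : selfadjoint ip A. Proof. exact: positive_selfadjoint. Qed.

Let ripA_ge0 y : 0 <= rip y (A y).
Proof. by have := A_pos y; rewrite complex_ge0E => /andP[]. Qed.
Let ripA_le y : rip y (A y) <= k * sqnorm y.
Proof.
apply: le_trans (rip_le ip_inner _ _) _.
apply: le_trans (ler_wpM2l (hnorm_ge0 _ _) (A_bounded y)) _.
rewrite mulrCA -(sqr_hnorm ip_inner) expr2.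
apply: ler_wpM2r; first by rewrite mulr_ge0 ?hnorm_ge0.
by have := ler_norm c; rewrite /k; lra.
Qed.

(* Since A <= k, the operator B = I - A/k satisfies 0 <= B <= I, and the square
   root of A/k is I - X where X = (B + X^2)/2; X is the limit of the iterates
   X_{N+1} = (B + X_N^2)/2, which are polynomials in B with nonnegative
   coefficients. *)
Definition sqrt_base y := y - (k^-1)%:C%C *: A y.

Let B_lin : linear_op sqrt_base.
Proof.
move=> a x y; rewrite /sqrt_base A_lin scalerDr scalerA mulrC -scalerA scalerBr.
by rewrite addrACA -!addrA opprD.
Qed.
Let B_sa : selfadjoint ip sqrt_base.
Proof.
move=> x y; rewrite /sqrt_base (ipBl ip_inner) (ipBr ip_inner) (ipZl ip_inner).
by rewrite (ipZr ip_inner) conj_real A_sa.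
Qed.
Let ripB y : rip y (sqrt_base y) = sqnorm y - k^-1 * rip y (A y).
Proof. by rewrite /sqrt_base (ripBr ip_inner) (ripZr ip_inner). Qed.
Let ripB_ge0 y : 0 <= rip y (sqrt_base y).
Proof. by rewrite ripB subr_ge0 ler_pdivrMl // ripA_le. Qed.
Let ripB_le y : rip y (sqrt_base y) <= sqnorm y.
Proof. by rewrite ripB lerBlDr lerDl mulr_ge0 ?invr_ge0 ?ripA_ge0 // ltW. Qed.

Let hnormB_le y : hnorm (sqrt_base y) <= hnorm y.
Proof.
suff : sqnorm (sqrt_base y) <= sqnorm y by rewrite ler_sqrt ?sqnorm_ge0.
have := cauchy_schwarz_op ip_inner B_lin B_sa ripB_ge0 (sqrt_base y) y.
have By_le := ripB_le (sqrt_base y); have y_le := ripB_le y.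
rewrite -/(sqnorm _) => cs.
have [->|Byn0] := eqVneq (sqnorm (sqrt_base y)) 0; first exact: sqnorm_ge0.
have By_gt0 : 0 < sqnorm (sqrt_base y) by rewrite lt_def Byn0 sqnorm_ge0.
rewrite -(ler_pM2l By_gt0) -expr2; apply: le_trans cs _.
by apply: ler_pM => //; apply: ripB_ge0.
Qed.

Let iterB_lin i : linear_op (iter i sqrt_base).
Proof. by elim: i => [|i IH] a x y //=; rewrite IH B_lin. Qed.
Let iterB_sa i : selfadjoint ip (iter i sqrt_base).
Proof. by elim: i => [|i IH] x y //=; rewrite B_sa IH -iterSr. Qed.
Let hnorm_iterB_le i y : hnorm (iter i sqrt_base y) <= hnorm y.
Proof. by elim: i => [|i IH] //=; apply: le_trans (hnormB_le _) IH. Qed.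
Let norm_rip_iterB_le i y : `|rip y (iter i sqrt_base y)| <= sqnorm y.
Proof.
apply: le_trans (norm_rip_le ip_inner _ _) _.
by rewrite -(sqr_hnorm ip_inner) expr2 ler_wpM2l ?hnorm_ge0 ?hnorm_iterB_le.
Qed.

Definition hornerB (p : {poly R}) y := \sum_(0 <= i < size p) (p`_i)%:C%C *: iter i sqrt_base y.

Lemma hornerB_widen (p : {poly R}) y n : (size p <= n)%N ->
  hornerB p y = \sum_(0 <= i < n) (p`_i)%:C%C *: iter i sqrt_base y.
Proof.
move=> pn; rewrite /hornerB (big_cat_nat (leq0n (size p)) pn) /=.
rewrite [X in _ = _ + X]big1_seq ?addr0 // => i /andP[_].
by rewrite mem_index_iota => /andP[pi _]; rewrite nth_default // scale0r.
Qed.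

Lemma hornerB0 y : hornerB 0 y = 0. Proof. by rewrite /hornerB size_poly0 big_geq. Qed.

Lemma hornerBD p q y : hornerB (p + q) y = hornerB p y + hornerB q y.
Proof.
have [pn qn] := (leq_maxl (size p) (size q), leq_maxr (size p) (size q)).
rewrite (hornerB_widen y pn) (hornerB_widen y qn).
rewrite (hornerB_widen y (leq_trans (size_polyD p q) (leqnn _))) -big_split /=.
by apply: eq_bigr => i _; rewrite coefD rmorphD scalerDl.
Qed.

Lemma hornerBZ a p y : hornerB (a *: p) y = a%:C%C *: hornerB p y.
Proof.
rewrite (hornerB_widen y (size_scale_leq a p)) /hornerB scaler_sumr.
by apply: eq_bigr => i _; rewrite coefZ rmorphM scalerA.
Qed.

Lemma hornerBB p q y : hornerB (p - q) y = hornerB p y - hornerB q y.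
Proof. by rewrite hornerBD -[- q]scaleN1r hornerBZ rmorphN rmorph1 scaleN1r. Qed.

Lemma hornerBC a y : hornerB a%:P y = a%:C%C *: y.
Proof. by rewrite (@hornerB_widen _ y 1) ?size_polyC ?leq_b1 // big_nat1 coefC. Qed.

Lemma hornerBMX p y : hornerB (p * 'X) y = sqrt_base (hornerB p y).
Proof.
rewrite (@hornerB_widen _ y (size p).+1); last first.
  by apply: leq_trans (size_polyMleq _ _) _; rewrite size_polyX addn2.
rewrite big_nat_recl // coefMX eqxx scale0r add0r /hornerB (linop_sum B_lin).
by apply: eq_bigr => i _; rewrite coefMX /= (linopZ B_lin).
Qed.

Lemma hornerB_lin p : linear_op (hornerB p).
Proof.
move=> a x y; rewrite /hornerB scaler_sumr -big_split /=; apply: eq_bigr => i _.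
by rewrite iterB_lin scalerDr !scalerA mulrC.
Qed.

Lemma hornerBM p q y : hornerB (p * q) y = hornerB p (hornerB q y).
Proof.
elim/poly_ind: p => [|p a IH]; first by rewrite mul0r !hornerB0.
rewrite mulrDl mulrAC mul_polyC hornerBD hornerBZ hornerBMX IH.
by rewrite hornerBD hornerBMX hornerBC.
Qed.

Lemma hornerBX y : hornerB 'X y = sqrt_base y.
Proof. by rewrite -[X in hornerB X]mul1r hornerBMX -polyC1 hornerBC scale1r. Qed.

Definition nonneg_coefs (p : {poly R}) := forall i, 0 <= p`_i.

Lemma horner1_sum (p : {poly R}) : p.[1] = \sum_(0 <= i < size p) p`_i.
Proof. by rewrite horner_coef big_mkord; apply: eq_bigr => i _; rewrite expr1n mulr1. Qed.

Lemma horner1_ge0 p : nonneg_coefs p -> 0 <= p.[1].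
Proof. by move=> p_ge0; rewrite horner1_sum sumr_ge0. Qed.

Lemma hnorm_hornerB_le p y : nonneg_coefs p -> hnorm (hornerB p y) <= p.[1] * hnorm y.
Proof.
move=> p_ge0; apply: le_trans (hnorm_sum ip_inner _ _ _) _.
rewrite horner1_sum mulr_suml; apply: ler_sum => i _.
by rewrite (hnormZ_real ip_inner) ger0_norm // ler_wpM2l.
Qed.

Lemma Im_ip_hornerB p y : Im (ip y (hornerB p y)) = 0.
Proof.
rewrite (ip_sumr ip_inner) Im_sum big1 // => i _.
by rewrite (ipZr ip_inner) Im_realM (selfadjoint_Im_ip (iterB_sa i)) mulr0.
Qed.

Lemma rip_hornerB_le p y : nonneg_coefs p -> rip y (hornerB p y) <= p.[1] * sqnorm y.
Proof.
move=> p_ge0; rewrite /rip (ip_sumr ip_inner) Re_sum horner1_sum mulr_suml.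
apply: ler_sum => i _; rewrite (ipZr ip_inner) Re_realM ler_wpM2l //.
exact: le_trans (ler_norm _) (norm_rip_iterB_le _ _).
Qed.

Lemma nonneg_coefsD p q : nonneg_coefs p -> nonneg_coefs q -> nonneg_coefs (p + q).
Proof. by move=> p_ge0 q_ge0 i; rewrite coefD addr_ge0. Qed.
Lemma nonneg_coefsM p q : nonneg_coefs p -> nonneg_coefs q -> nonneg_coefs (p * q).
Proof. by move=> p_ge0 q_ge0 i; rewrite coefM sumr_ge0 // => j _; rewrite mulr_ge0. Qed.
Lemma nonneg_coefsZ a p : 0 <= a -> nonneg_coefs p -> nonneg_coefs (a *: p).
Proof. by move=> a_ge0 p_ge0 i; rewrite coefZ mulr_ge0. Qed.
Lemma nonneg_coefsX : nonneg_coefs 'X. Proof. by move=> i; rewrite coefX ler0n. Qed.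

Fixpoint sqrt_poly (N : nat) : {poly R} :=
  if N is N'.+1 then 2^-1 *: ('X + sqrt_poly N' ^+ 2) else 0.

Lemma nonneg_coefs_sqrt_poly N : nonneg_coefs (sqrt_poly N).
Proof.
elim: N => [i|N IH] /=; first by rewrite coef0.
apply: nonneg_coefsZ; first by rewrite invr_ge0 ler0n.
by apply: nonneg_coefsD; [exact: nonneg_coefsX | rewrite expr2; exact: nonneg_coefsM].
Qed.

Lemma nonneg_coefs_sqrt_polyS N : nonneg_coefs (sqrt_poly N.+1 - sqrt_poly N).
Proof.
have half_ge0 : 0 <= 2^-1 :> R by rewrite invr_ge0 ler0n.
elim: N => [|N IH].
  by rewrite /= subr0 expr0n /= addr0; apply: nonneg_coefsZ => //; exact: nonneg_coefsX.
have -> : sqrt_poly N.+2 - sqrt_poly N.+1 =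
    2^-1 *: ((sqrt_poly N.+1 - sqrt_poly N) * (sqrt_poly N.+1 + sqrt_poly N)).
  rewrite -subr_sqr [sqrt_poly N.+2]/= [sqrt_poly N.+1 in RHS]/= -scalerBr.
  by rewrite opprD addrACA subrr add0r.
apply: nonneg_coefsZ; rewrite //; apply: nonneg_coefsM => //.
by apply: nonneg_coefsD; apply: nonneg_coefs_sqrt_poly.
Qed.

Lemma nonneg_coefs_sqrt_polyB N M : (N <= M)%N -> nonneg_coefs (sqrt_poly M - sqrt_poly N).
Proof.
move=> /subnK <-; elim: (M - N)%N => [|d IH]; first by rewrite add0n subrr => i; rewrite coef0.
rewrite addSn -(subrK (sqrt_poly (d + N)) (sqrt_poly (d + N).+1)) -addrA.
exact: nonneg_coefsD (nonneg_coefs_sqrt_polyS _) IH.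
Qed.

Lemma sqrt_poly1_le1 N : (sqrt_poly N).[1] <= 1.
Proof.
elim: N => [|N IH]; first by rewrite /= horner0.
rewrite /= hornerZ hornerD hornerX expr2 hornerM.
have := horner1_ge0 (nonneg_coefs_sqrt_poly N); move: IH.
set v := (sqrt_poly N).[1] => v_le1 v_ge0.
have : v * v <= 1 by rewrite -(mulr1 1) ler_pM.
lra.
Qed.

Lemma sqrt_poly1_mono N M : (N <= M)%N -> (sqrt_poly N).[1] <= (sqrt_poly M).[1].
Proof.
move=> NM; have := horner1_ge0 (nonneg_coefs_sqrt_polyB NM).
by rewrite hornerD hornerN subr_ge0.
Qed.

Lemma sqrt_poly1_cauchy e : 0 < e ->
  exists N, forall M, (N <= M)%N -> (sqrt_poly M).[1] - (sqrt_poly N).[1] < e.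
Proof.
move=> e_gt0; pose s N := (sqrt_poly N).[1].
have s_sup : has_sup (range s).
  by split; [exists (s 0%N), 0%N | exists 1 => _ [N _ <-]; exact: sqrt_poly1_le1].
have [_ [N _ <-] sN_gt] := sup_adherent e_gt0 s_sup.
exists N => M _; have : s M <= sup (range s) by apply: ub_le_sup; [case: s_sup | exists M].
rewrite /s in sN_gt *; lra.
Qed.

Definition sqrt_iter N y := hornerB (sqrt_poly N) y.

Lemma hnorm_sqrt_iter_le N y : hnorm (sqrt_iter N y) <= hnorm y.
Proof.
apply: le_trans (hnorm_hornerB_le _ (nonneg_coefs_sqrt_poly N)) _.
by rewrite -[leRHS]mul1r ler_wpM2r ?hnorm_ge0 ?sqrt_poly1_le1.
Qed.

Lemma sqrt_iter_cauchy y : hcauchy ip (sqrt_iter^~ y).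
Proof.
move=> e e_gt0.
have y1_gt0 : 0 < hnorm y + 1 by rewrite ltr_wpDl ?hnorm_ge0.
have [N hN] := sqrt_poly1_cauchy (divr_gt0 e_gt0 y1_gt0).
have close n M : (N <= n)%N -> (n <= M)%N -> hnorm (sqrt_iter M y - sqrt_iter n y) < e.
  move=> Nn nM; rewrite /sqrt_iter -hornerBB.
  apply: le_lt_trans (hnorm_hornerB_le _ (nonneg_coefs_sqrt_polyB nM)) _.
  rewrite hornerD hornerN.
  have := hN M (leq_trans Nn nM); have := sqrt_poly1_mono Nn; have := sqrt_poly1_mono nM.
  rewrite ltr_pdivlMr // => ? ? hM; have := hnorm_ge0 ip y; nra.
exists N => n M Nn NM; case: (leqP n M) => nM; first by rewrite (hnorm_distC ip_inner) close.
exact: close (ltnW nM).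
Qed.

Definition sqrt_iter_lim y :=
  epsilon (inhabits (0 : H)) (fun z => hcvg_to ip (sqrt_iter^~ y) z).
Local Notation X := sqrt_iter_lim.

Lemma sqrt_iter_cvg y : hcvg_to ip (sqrt_iter^~ y) (X y).
Proof. by apply: epsilon_spec; apply: H_complete; apply: sqrt_iter_cauchy. Qed.

Lemma sqrt_iter_lim_lin : linear_op X.
Proof.
move=> a x y.
have lim_comb := hcvgD ip_inner (hcvgZ ip_inner a (sqrt_iter_cvg x)) (sqrt_iter_cvg y).
apply: (hcvg_uniq ip_inner _ lim_comb).
rewrite (_ : (fun N => _) = sqrt_iter^~ (a *: x + y)); first exact: sqrt_iter_cvg.
by apply: funext => N; rewrite /sqrt_iter hornerB_lin.
Qed.

Lemma hnorm_sqrt_iter_lim_le y : hnorm (X y) <= hnorm y.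
Proof. exact: (@hcvg_hnorm_le _ _ _ ip_inner _ _ _ (hnorm_sqrt_iter_le ^~ y) (sqrt_iter_cvg y)). Qed.

Lemma sqrt_iter_iter_cvg y : hcvg_to ip (fun N => sqrt_iter N (sqrt_iter N y)) (X (X y)).
Proof.
move=> e e_gt0.
have e2_gt0 : 0 < e / 2 by rewrite divr_gt0.
have [N1 h1] := sqrt_iter_cvg y e2_gt0; have [N2 h2] := sqrt_iter_cvg (X y) e2_gt0.
exists (maxn N1 N2) => N; rewrite geq_max => /andP[N1N N2N].
have := h1 N N1N; have := h2 N N2N.
have := hnorm_sqrt_iter_le N (sqrt_iter N y - X y).
have := ler_hnormD ip_inner (sqrt_iter N (sqrt_iter N y - X y)) (sqrt_iter N (X y) - X (X y)).
by rewrite /sqrt_iter (linopB (hornerB_lin _)) addrA subrK; lra.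
Qed.

Lemma sqrt_iter_lim_fixpoint y : X y = (2^-1)%:C%C *: (sqrt_base y + X (X y)).
Proof.
have lim_rec := hcvgZ ip_inner (2^-1)%:C%C
  (hcvgD ip_inner (hcvg_cst ip_inner (sqrt_base y)) (sqrt_iter_iter_cvg y)).
apply: (hcvg_uniq ip_inner (hcvg_shift (sqrt_iter_cvg y))).
rewrite (_ : (fun N => _) = fun N => sqrt_iter N.+1 y) in lim_rec; first exact: lim_rec.
by apply: funext => N; rewrite /sqrt_iter /= hornerBZ hornerBD hornerBX expr2 hornerBM.
Qed.

Lemma Im_ip_sqrt_iter_lim y : Im (ip y (X y)) = 0.
Proof.
have Im0 z : (forall N, rip z (sqrt_iter N y) = 0) -> rip z (X y) <= 0.
  by move=> z0; apply: (hcvg_rip_le ip_inner _ (sqrt_iter_cvg y)) => N; rewrite z0.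
apply/eqP; rewrite eq_le (Im_ipE ip_inner) Im0 => [/=|N]; last first.
  by rewrite -(Im_ipE ip_inner) Im_ip_hornerB.
rewrite -oppr_le0 -(ripNl ip_inner) Im0 // => N.
by rewrite (ripNl ip_inner) -(Im_ipE ip_inner) Im_ip_hornerB oppr0.
Qed.

Lemma rip_sqrt_iter_lim_le y : rip y (X y) <= sqnorm y.
Proof.
apply: (hcvg_rip_le ip_inner _ (sqrt_iter_cvg y)) => N.
apply: le_trans (rip_hornerB_le _ (nonneg_coefs_sqrt_poly N)) _.
by rewrite -[leRHS]mul1r ler_wpM2r ?sqnorm_ge0 ?sqrt_poly1_le1.
Qed.

Definition sqrt_normalized y := y - X y.

Lemma sqrt_normalized_lin : linear_op sqrt_normalized.
Proof.
move=> a x y; rewrite /sqrt_normalized sqrt_iter_lim_lin scalerBr opprD addrACA.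
by rewrite -!addrA.
Qed.

Lemma sqrt_normalized_sqr y : sqrt_normalized (sqrt_normalized y) = (k^-1)%:C%C *: A y.
Proof.
have XX : X (X y) = X y + X y - sqrt_base y.
  have -> : X y + X y = sqrt_base y + X (X y).
    rewrite {1 2}(sqrt_iter_lim_fixpoint y) -scalerDl -rmorphD.
    by rewrite (_ : 2^-1 + 2^-1 = 1 :> R) ?rmorph1 ?scale1r //; field.
  by rewrite addrC addKr.
rewrite {1}/sqrt_normalized (linopB sqrt_iter_lim_lin) XX /sqrt_normalized /sqrt_base.
by rewrite !opprB [X y + X y + _ - _]addrAC addrK subrKA addrC subrK.
Qed.

Definition sqrt_op y := (Num.sqrt k)%:C%C *: sqrt_normalized y.

Lemma sqrt_op_sqr y : sqrt_op (sqrt_op y) = A y.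
Proof.
rewrite /sqrt_op (linopZ sqrt_normalized_lin) sqrt_normalized_sqr !scalerA.
rewrite -!real_complexM -expr2 sqr_sqrtr ?(ltW k_gt0) //.
by rewrite divff ?gt_eqF // rmorph1 scale1r.
Qed.

Lemma sqrt_op_pos : positive_op ip sqrt_op.
Proof.
split; first split.
- by move=> a x y; rewrite /sqrt_op sqrt_normalized_lin scalerDr !scalerA mulrC.
- exists (Num.sqrt k * 2) => y; rewrite /sqrt_op (hnormZ_real ip_inner).
  rewrite ger0_norm ?sqrtr_ge0 // -mulrA ler_wpM2l ?sqrtr_ge0 //.
  have := ler_hnormD ip_inner y (- X y); rewrite (hnorm_opp ip_inner).
  by have := hnorm_sqrt_iter_lim_le y; rewrite /sqrt_normalized; lra.
- move=> y; rewrite /sqrt_op (ipZr ip_inner) complex_ge0E Im_realM Re_realM (ipBr ip_inner).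
  rewrite ImB ReB Im_ip_sqrt_iter_lim (Im_ipxx ip_inner) subrr mulr0 eqxx /=.
  by rewrite mulr_ge0 ?sqrtr_ge0 // subr_ge0 rip_sqrt_iter_lim_le.
Qed.
End OfOperator.

Lemma op_sqrt_spec A : positive_op ip A ->
  positive_op ip (op_sqrt ip A) /\ forall x, op_sqrt ip A (op_sqrt ip A x) = A x.
Proof.
case=> [[A_lin [c A_bounded]] A_pos].
apply: (@epsilon_spec _ _ (fun S => positive_op ip S /\ forall x, S (S x) = A x)).
by exists (sqrt_op A c); split; [exact: sqrt_op_pos | exact: sqrt_op_sqr].
Qed.
End SquareRoot.

(** * The energy tree *)

Section EnergyTree.
Variable R : realType.
Variable H : lmodType R[i].
Variable ip : H -> H -> R[i].
Hypothesis ip_inner : is_inner_product ip.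
Hypothesis H_complete : forall u : nat -> H, hcauchy ip u -> exists y, hcvg_to ip u y.
Variable m : nat.
Variable P : 'I_m -> H -> H.
Variable R0 : H -> H.
Hypothesis P_proj : forall j, orth_proj ip (P j).
Hypothesis R0_pos : positive_op ip R0.
Local Notation rip := (rip ip).
Local Notation sqnorm := (sqnorm ip).
Local Notation hnorm := (hnorm ip).
Local Notation TR := (treeR ip P R0).
Implicit Types (u v z : H) (w : seq 'I_m) (j : 'I_m).

Let P_lin j : linear_op (P j). Proof. by case: (P_proj j) => [[]]. Qed.
Let P_idem j u : P j (P j u) = P j u. Proof. by case: (P_proj j). Qed.
Let P_sa j : selfadjoint ip (P j). Proof. by case: (P_proj j). Qed.

Lemma ip_proj j u : ip u (P j u) = ip (P j u) (P j u).
Proof. by rewrite P_sa P_idem. Qed.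

Lemma treeR_rcons w j : TR (rcons w j) = tree_step ip P (TR w) j.
Proof. by rewrite /treeR foldl_rcons. Qed.

Lemma tree_step_pos Rw j : positive_op ip Rw -> positive_op ip (tree_step ip P Rw j).
Proof.
move=> Rw_pos; have [[[S_lin [cS S_bounded]] S_pos] _] := op_sqrt_spec ip_inner H_complete Rw_pos.
have S_sa := positive_selfadjoint ip_inner S_lin S_pos.
case: (P_proj j) => [[_ [cP P_bounded]] _ _].
have absP u : hnorm (P j u) <= `|cP| * hnorm u.
  by apply: le_trans (P_bounded u) _; rewrite ler_wpM2r ?hnorm_ge0 ?ler_norm.
have absS u : hnorm (op_sqrt ip Rw u) <= `|cS| * hnorm u.
  by apply: le_trans (S_bounded u) _; rewrite ler_wpM2r ?hnorm_ge0 ?ler_norm.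
split; first split.
- move=> a x y; rewrite /tree_step.
  by rewrite S_lin (P_lin j) opprD addrACA -scalerBr S_lin.
- exists (`|cS| * ((1 + `|cP|) * `|cS|)) => v; rewrite /tree_step.
  apply: le_trans (absS _) _; rewrite -mulrA ler_wpM2l //.
  apply: le_trans (ler_hnormD ip_inner _ _) _; rewrite (hnorm_opp ip_inner).
  apply: le_trans (_ : hnorm (op_sqrt ip Rw v) * (1 + `|cP|) <= _).
    by rewrite mulrDr mulr1 lerD2l mulrC absP.
  by rewrite mulrC -mulrA ler_wpM2l ?addr_ge0 ?absS.
- move=> v; rewrite /tree_step -S_sa; set u := op_sqrt ip Rw v.
  have -> : ip u (u - P j u) = ip (u - P j u) (u - P j u).
    rewrite (ipBl ip_inner) !(ipBr ip_inner) ip_proj P_sa P_idem.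
    by rewrite [ip (P j u) u]P_sa subrr subr0.
  exact: ip_ge0.
Qed.

Lemma treeR_pos w : positive_op ip (TR w).
Proof.
elim/last_ind: w => [|w j IH]; first exact: R0_pos.
by rewrite treeR_rcons; apply: tree_step_pos.
Qed.

Local Notation S w := (op_sqrt ip (TR w)).

Lemma sqrt_treeR_sa w : selfadjoint ip (S w).
Proof.
by have [[[S_lin _] S_pos] _] := op_sqrt_spec ip_inner H_complete (treeR_pos w);
   apply: positive_selfadjoint.
Qed.
Lemma sqrt_treeR_sqr w z : S w (S w z) = TR w z.
Proof. by have [_ ->] := op_sqrt_spec ip_inner H_complete (treeR_pos w). Qed.

Lemma sqnorm_sqrt_treeR w z : sqnorm (S w z) = qf ip z (TR w).
Proof. by rewrite /sqnorm /rip sqrt_treeR_sa sqrt_treeR_sqr. Qed.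

Lemma qf_treeR_rcons v w j :
  qf ip v (TR (rcons w j)) = qf ip v (TR w) - sqnorm (P j (S w v)).
Proof.
rewrite treeR_rcons /qf /tree_step -sqrt_treeR_sa (ipBr ip_inner) ReB ip_proj.
by rewrite -/(rip _ _) -/(sqnorm _) sqnorm_sqrt_treeR.
Qed.

Lemma energy_aE x w j : energy_a ip P R0 x w j = sqnorm (P j (S w x)).
Proof. by rewrite /energy_a /qf /treeD -sqrt_treeR_sa ip_proj. Qed.

Lemma qf_treeR_ge0 v w : 0 <= qf ip v (TR w).
Proof. by rewrite -sqnorm_sqrt_treeR sqnorm_ge0. Qed.

Lemma qf_treeR_le v w : qf ip v (TR w) <= qf ip v R0.
Proof.
elim/last_ind: w => [|w j IH] //.
by rewrite qf_treeR_rcons; apply: le_trans IH; rewrite lerBlDr lerDl sqnorm_ge0.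
Qed.

Lemma sqnorm_sqrt_treeR_le w z : sqnorm (S w z) <= sqnorm (S [::] z).
Proof. by rewrite !sqnorm_sqrt_treeR qf_treeR_le. Qed.

Lemma sqnorm_treeR_le : exists K, forall x w, sqnorm (TR w x) <= K * qf ip x (TR w).
Proof.
case: R0_pos => [[_ [c R0_bounded]] _]; exists `|c| => x w.
rewrite -sqrt_treeR_sqr; apply: le_trans (sqnorm_sqrt_treeR_le _ _) _.
rewrite (sqnorm_sqrt_treeR [::]) -(sqnorm_sqrt_treeR w x); set z := S w x.
apply: le_trans (rip_le ip_inner z (R0 z)) _.
apply: le_trans (_ : hnorm z * (`|c| * hnorm z) <= _).
  rewrite ler_wpM2l ?hnorm_ge0 //; apply: le_trans (R0_bounded z) _.
  by rewrite ler_wpM2r ?hnorm_ge0 ?ler_norm.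
by rewrite mulrCA -(sqr_hnorm ip_inner) expr2.
Qed.

Hypothesis splitting : forall v, in_H0 ip R0 v -> \sum_(j < m) P j v = v.

Definition split_defect v := \sum_(j < m) P j v - v.

Lemma split_defect_sa : selfadjoint ip split_defect.
Proof.
move=> a b; rewrite /split_defect (ipBl ip_inner) (ipBr ip_inner).
rewrite (ip_suml ip_inner) (ip_sumr ip_inner).
by congr (_ - _); apply: eq_bigr => j _; rewrite P_sa.
Qed.

(* The defect is self-adjoint and vanishes on ran R_0^{1/2}, which lies in H_0. *)
Lemma sqrt_R0_split_defect z : S [::] (split_defect z) = 0.
Proof.
have in_range : in_H0 ip R0 (S [::] (S [::] (split_defect z))).
  by move=> e e_gt0; exists (S [::] (split_defect z)); rewrite subrr (hnorm0 ip_inner).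
apply: (sqnorm_eq0 ip_inner); rewrite /sqnorm /rip sqrt_treeR_sa split_defect_sa.
by rewrite {1}/split_defect (splitting in_range) subrr (ip0r ip_inner).
Qed.

Lemma sqrt_treeR_split_defect w z : S w (split_defect z) = 0.
Proof.
apply: (sqnorm_eq0 ip_inner); apply/eqP; rewrite eq_le (sqnorm_ge0 ip_inner) andbT.
by apply: le_trans (sqnorm_sqrt_treeR_le _ _) _; rewrite sqrt_R0_split_defect /sqnorm rip0r.
Qed.

Lemma sum_energy_a x w : \sum_(j < m) energy_a ip P R0 x w j = qf ip x (TR w).
Proof.
under eq_bigr do rewrite energy_aE /sqnorm /rip -ip_proj.
rewrite -Re_sum -(ip_sumr ip_inner).
have -> : \sum_(j < m) P j (S w x) = split_defect (S w x) + S w x by rewrite subrK.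
rewrite (ipDr ip_inner) ReD [ip _ (split_defect _)]sqrt_treeR_sa sqrt_treeR_split_defect.
rewrite (ip0r ip_inner) add0r.
exact: sqnorm_sqrt_treeR.
Qed.
End EnergyTree.

Local Open Scope classical_set_scope.

Local Notation prefix := Defs.prefix.

(** * The energy-biased walk *)

Lemma sqr_sum_le (R : realFieldType) n (a : 'I_n.+1 -> R) :
  (\sum_(j < n.+1) a j) ^+ 2 <= n.+1%:R * \sum_(j < n.+1) a j ^+ 2.
Proof.
set S := \sum_(j < n.+1) a j; set T := \sum_(j < n.+1) a j ^+ 2.
have m_gt0 : 0 < n.+1%:R :> R by rewrite ltr0n.
have : 0 <= \sum_(j < n.+1) (a j - S / n.+1%:R) ^+ 2 by apply: sumr_ge0 => j _; apply: sqr_ge0.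
rewrite (eq_bigr (fun j => a j ^+ 2 + (- 2 * (S / n.+1%:R) * a j + (S / n.+1%:R) ^+ 2)));
  last by move=> j _; ring.
rewrite !big_split /= -mulr_sumr sumr_const card_ord -/S -/T.
have -> : T + (- 2 * (S / n.+1%:R) * S + (S / n.+1%:R) ^+ 2 *+ n.+1) =
    (n.+1%:R * T - S ^+ 2) / n.+1%:R.
  by rewrite -mulr_natr; field; rewrite addrC natr1 pnatr_eq0.
by rewrite pmulr_lge0 ?invr_gt0 // subr_ge0.
Qed.

(* With p_j = a_j / sum a, the expected remaining energy is
   sum a - (sum a_j^2) / sum a, and Cauchy-Schwarz bounds sum a_j^2 from below. *)
Lemma biased_step_le (R : realFieldType) n (a q : 'I_n.+1 -> R) : (forall j, 0 <= a j) ->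
  \sum_(j < n.+1) (if 0 < \sum_(k < n.+1) a k then a j / \sum_(k < n.+1) a k else q j) *
     (\sum_(k < n.+1) a k - a j) <= (1 - n.+1%:R^-1) * \sum_(k < n.+1) a k.
Proof.
move=> a_ge0; set S := \sum_(k < n.+1) a k.
have m_gt0 : 0 < n.+1%:R :> R by rewrite ltr0n.
have [S_gt0|S_le0] := ltrP 0 S.
  rewrite (eq_bigr (fun j => a j - a j ^+ 2 / S)); last by move=> j _; field; rewrite gt_eqF.
  rewrite sumrB -mulr_suml -/S (_ : (1 - _) * S = S - S / n.+1%:R); last by ring.
  rewrite lerD2l lerN2 ler_pdivrMr // mulrAC ler_pdivlMr // -expr2 mulrC.
  exact: sqr_sum_le.
have S0 : S = 0 by apply/eqP; rewrite eq_le S_le0 sumr_ge0.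
have a0 j : a j = 0.
  by apply/eqP; rewrite eq_le a_ge0 andbT -S0 /S (bigD1 j) //= lerDl sumr_ge0.
by rewrite big1 ?S0 ?mulr0 // => j _; rewrite a0 subrr mulr0.
Qed.

Section PathSpace.
Variable n : nat.
Local Notation m := n.+1.

Fixpoint words (k : nat) : seq (seq 'I_m) :=
  if k is k'.+1 then [seq rcons w j | w <- words k', j <- enum 'I_m] else [:: [::]].

Lemma size_words k w : w \in words k -> size w = k.
Proof.
elim: k w => [|k IH] w /=; first by rewrite inE => /eqP ->.
by case/allpairsPdep => [v [j [/IH v_k _ ->]]]; rewrite size_rcons v_k.
Qed.

Lemma uniq_words k : uniq (words k).
Proof.
elim: k => [|k IH] //=; apply: allpairs_uniq_dep => //; first by move=> w _; apply: enum_uniq.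
by move=> [w1 j1] [w2 j2] _ _ /= /rcons_inj [-> ->].
Qed.

Lemma prefix_in_words k (om : nat -> 'I_m) : prefix om k \in words k.
Proof.
elim: k => [|k IH] //; rewrite /prefix mkseqS.
by apply/allpairsPdep; exists (prefix om k), (om k); rewrite mem_enum.
Qed.

Lemma big_words_succ (V : nmodType) k (F : seq 'I_m -> V) :
  \sum_(w <- words k.+1) F w = \sum_(w <- words k) \sum_(j < m) F (rcons w j).
Proof. by rewrite /= big_allpairs_dep; apply: eq_bigr => w _; rewrite big_enum. Qed.

Lemma measurable_cyl w : measurable (cyl w : set (Omega n)).
Proof. by apply: sub_gen_smallest; exists w. Qed.

Lemma measurable_prefix k (A : pred (seq 'I_m)) :
  measurable [set om : Omega n | A (prefix om k)].
Proof.
rewrite (_ : [set om | _] = \big[setU/set0]_(w <- words k | A w) cyl w).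
  by apply: bigsetU_measurable => w _; apply: measurable_cyl.
rewrite -bigcup_seq_cond; apply/seteqP; split => om /=.
  move=> A_om; exists (prefix om k); first by rewrite /= prefix_in_words.
  by rewrite /cyl /= /prefix size_mkseq.
by case=> w /= /andP[w_k A_w]; rewrite /cyl /= (size_words w_k) => ->.
Qed.

Variable R : realType.
Variable nu : probability (Omega n) R.
Variable pr : seq 'I_m -> R.
Hypothesis nu_cyl : forall w, nu (cyl w) = (pr w)%:E.

Lemma integral_prefix k (g : seq 'I_m -> R) : (forall w, 0 <= g w) ->
  (\int[nu]_om (g (prefix om k))%:E = (\sum_(w <- words k) g w * pr w)%:E)%E.
Proof.
move=> g_ge0.
have -> : (fun om : Omega n => (g (prefix om k))%:E) =
    (fun om => \sum_(w <- words k) (g w * \1_(cyl w) om)%:E).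
  apply: funext => om; rewrite (bigD1_seq (prefix om k)) ?prefix_in_words ?uniq_words //=.
  rewrite big1_seq.
    by rewrite indicE mem_set ?mulr1 ?adde0 // /cyl /= /prefix size_mkseq.
  move=> w /andP[w_neq w_k]; rewrite indicE memNset ?mulr0 //.
  by rewrite /cyl /= (size_words w_k) => w_eq; rewrite w_eq eqxx in w_neq.
rewrite ge0_integral_sum //.
- rewrite -sumEFin; apply: eq_bigr => w _.
  rewrite (integralZl_indic measurableT (fun=> cyl w : set (Omega n))) //;
    last exact: measurable_cyl.
    rewrite integral_indic //; last exact: measurable_cyl.
    by rewrite setIT EFinM; congr (_ * _)%E; exact: nu_cyl.
  by move=> /lt_geF; rewrite g_ge0.
- move=> w; apply/measurable_realfun.measurable_EFinP.
  apply: measurable_realfun.measurable_funM; first exact: measurable_cst.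
  by apply: measurable_realfun.measurable_indic; exact: measurable_cyl.
- by move=> w om _; rewrite lee_fin mulr_ge0 // indicE ler0n.
Qed.
End PathSpace.

Lemma exists_expr_lt (R : realType) (a K e : R) : 0 <= a < 1 -> 0 < e ->
  exists k, a ^+ k * K < e.
Proof.
case/andP=> a_ge0 a_lt1 e_gt0.
have K1_gt0 : 0 < `|K| + 1 by rewrite ltr_wpDl.
have a_norm_lt1 : `|a| < 1 by rewrite ger0_norm.
have [N _ /(_ N (leqnn N)) /= aN_lt] :=
  cvgr0_norm_lt _ (cvg_expr a_norm_lt1) _ (divr_gt0 e_gt0 K1_gt0).
exists N; rewrite ger0_norm ?exprn_ge0 // ltr_pdivlMr // in aN_lt.
apply: le_lt_trans aN_lt; rewrite ler_wpM2l ?exprn_ge0 //.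
by have := ler_norm K; lra.
Qed.

Lemma path_prob_from_rcons (R : realType) (H : lmodType R[i]) (ip : H -> H -> R[i])
  m (P : 'I_m -> H -> H) R0 q x pre w j :
  path_prob_from ip P R0 q x pre (rcons w j) =
  path_prob_from ip P R0 q x pre w * trans_prob ip P R0 q x (pre ++ w) j.
Proof.
elim: w pre => [|a w IH] pre /=; first by rewrite cats0 mulr1 mul1r.
by rewrite IH mulrA cat_rcons.
Qed.

Section EnergyWalk.
Variable R : realType.
Variable H : lmodType R[i].
Variable ip : H -> H -> R[i].
Hypothesis ip_inner : is_inner_product ip.
Hypothesis H_complete : forall u : nat -> H, hcauchy ip u -> exists y, hcvg_to ip u y.
Variable n : nat.
Local Notation m := n.+1.
Variable P : 'I_m -> H -> H.
Variable R0 : H -> H.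
Variable q : 'I_m -> R.
Hypothesis P_proj : forall j, orth_proj ip (P j).
Hypothesis R0_pos : positive_op ip R0.
Hypothesis q_ge0 : forall j, 0 <= q j.
Hypothesis splitting : forall v, in_H0 ip R0 v -> \sum_(j < m) P j v = v.
Variable x : H.

Local Notation M w := (qf ip x (treeR ip P R0 w)).
Local Notation a := (energy_a ip P R0 x).
Local Notation tp := (trans_prob ip P R0 q x).
Local Notation pr := (path_prob ip P R0 q x).
Local Notation c := (1 - m%:R^-1 : R).

Let M_ge0 w : 0 <= M w.
Proof. by have := qf_treeR_ge0 ip_inner H_complete P_proj R0_pos x w. Qed.

Lemma energy_a_ge0 w j : 0 <= a w j.
Proof. by rewrite (energy_aE ip_inner H_complete P_proj R0_pos) sqnorm_ge0. Qed.

Lemma qf_treeR_rcons_energy w j : M (rcons w j) = M w - a w j.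
Proof.
by rewrite (qf_treeR_rcons ip_inner H_complete P_proj R0_pos)
           (energy_aE ip_inner H_complete P_proj R0_pos).
Qed.

Lemma trans_prob_ge0 w j : 0 <= tp w j.
Proof. by rewrite /trans_prob; case: ifP => // /ltW; apply: divr_ge0; apply: energy_a_ge0. Qed.

Lemma path_prob_rcons w j : pr (rcons w j) = pr w * tp w j.
Proof. exact: path_prob_from_rcons. Qed.

Lemma path_prob_ge0 w : 0 <= pr w.
Proof.
elim/last_ind: w => [|w j IH]; first by rewrite /path_prob /= ler01.
by rewrite path_prob_rcons mulr_ge0 ?trans_prob_ge0.
Qed.

Definition expected_energy k := \sum_(w <- words n k) M w * pr w.

Lemma expected_energy_succ_le k : expected_energy k.+1 <= c * expected_energy k.
Proof.
rewrite /expected_energy big_words_succ mulr_sumr; apply: ler_sum => w _.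
have -> : \sum_(j < m) M (rcons w j) * pr (rcons w j) = pr w * \sum_(j < m) tp w j * (M w - a w j).
  by rewrite mulr_sumr; apply: eq_bigr => j _; rewrite qf_treeR_rcons_energy path_prob_rcons; ring.
rewrite mulrA [pr w * _]mulrC ler_wpM2r ?path_prob_ge0 //.
rewrite -(sum_energy_a ip_inner H_complete P_proj R0_pos splitting).
exact: biased_step_le (energy_a_ge0 w).
Qed.

Lemma rate_bounds : 0 <= c < 1.
Proof. by rewrite subr_ge0 invf_le1 // ler1n ltrBlDr ltrDl invr_gt0 ltr0n. Qed.

Lemma expected_energy_le k : expected_energy k <= c ^+ k * M [::].
Proof.
elim: k => [|k IH]; first by rewrite /expected_energy /= big_seq1 /path_prob /= expr0 !mul1r mulr1.
apply: le_trans (expected_energy_succ_le k) _.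
by have [c_ge0 _] := andP rate_bounds; rewrite exprS -mulrA ler_wpM2l.
Qed.

Lemma qf_treeR_prefix_le (om : nat -> 'I_m) k k' : (k <= k')%N ->
  M (prefix om k') <= M (prefix om k).
Proof.
move=> /subnK <-; elim: (k' - k)%N => [|d IH] //.
rewrite addSn /prefix mkseqS qf_treeR_rcons_energy.
by apply: le_trans IH; rewrite lerBlDr lerDl energy_a_ge0.
Qed.

(* The energy bounds the squared norm of R_{om|k} x, so R_{om|k} x -> 0 in norm. *)
Lemma qf_Rinf_eq0 (om : nat -> 'I_m) :
  (forall e, 0 < e -> exists k, M (prefix om k) < e) -> qf ip x (Rinf ip P R0 om) = 0.
Proof.
move=> M_inf0.
have [K sqnorm_le] := sqnorm_treeR_le ip_inner H_complete P_proj R0_pos.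
have cvg0 : hcvg_to ip (fun k => treeR ip P R0 (prefix om k) x) 0.
  move=> e e_gt0; have K1_gt0 : 0 < `|K| + 1 by rewrite ltr_wpDl.
  have [N MN_lt] := M_inf0 _ (divr_gt0 (exprn_gt0 2 e_gt0) K1_gt0).
  exists N => k Nk; rewrite subr0.
  have Mk_lt := le_lt_trans (qf_treeR_prefix_le om Nk) MN_lt.
  rewrite ltr_pdivlMr // in Mk_lt.
  rewrite (hnormE ip) -(ger0_norm (ltW e_gt0)) -sqrtr_sqr ltr_sqrt ?exprn_gt0 //.
  have := sqnorm_le x (prefix om k).
  have := M_ge0 (prefix om k).
  by have := ler_norm K; nra.
have lim0 := epsilon_spec (inhabits (0 : H)) _ (ex_intro _ 0 cvg0).
by rewrite /qf /Rinf (hcvg_uniq ip_inner lim0 cvg0) (ip0r ip_inner).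
Qed.

Variable nu : probability (Omega n) R.
Hypothesis nu_cyl : forall w, nu (cyl w) = (pr w)%:E.

Lemma integral_Mn k : (\int[nu]_om (Mn ip P R0 x k om)%:E = (expected_energy k)%:E)%E.
Proof. by have := integral_prefix nu_cyl k M_ge0. Qed.

Lemma energy_ge_measure_le e k : 0 < e ->
  (nu [set om : Omega n | (e <= M (prefix om k))%R] <= (e^-1 * (c ^+ k * M [::]))%:E)%E.
Proof.
move=> e_gt0; pose ind w : R := ((e <= M w)%R)%:R.
have meas := measurable_prefix k (fun w => (e <= M w)%R).
have -> : nu [set om : Omega n | e <= M (prefix om k)] = (\sum_(w <- words n k) ind w * pr w)%:E.
  rewrite -(integral_prefix nu_cyl k (g := ind)) => [|w]; last by rewrite ler0n.
  have := integral_indic nu measurableT meas; rewrite setIT => <-.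
  apply: eq_integral => om _.
  rewrite indicE /ind; case: (boolP (e <= _)) => M_ge; first by rewrite mem_set.
  by rewrite memNset //; apply/negP.
rewrite lee_fin; apply: le_trans (_ : \sum_(w <- words n k) e^-1 * (M w * pr w) <= _).
  apply: ler_sum => w _; rewrite mulrA ler_wpM2r ?path_prob_ge0 // /ind.
  case: (boolP (e <= M w)) => [e_le|_]; first by rewrite ler_pdivlMl ?mulr1.
  by rewrite /= mulr0n mulr_ge0 ?M_ge0 // invr_ge0 ltW.
by rewrite -mulr_sumr ler_wpM2l ?invr_ge0 ?(ltW e_gt0) ?expected_energy_le.
Qed.

Lemma energy_bounded_below_negligible e : 0 < e ->
  nu.-negligible (\bigcap_k [set om : Omega n | e <= M (prefix om k)]).
Proof.
move=> e_gt0.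
have meas : measurable (\bigcap_k [set om : Omega n | e <= M (prefix om k)]).
  by apply: bigcap_measurable => [|k _]; [exists 0%N | exact: (measurable_prefix k (fun w => (e <= M w)%R))].
exists (\bigcap_k [set om : Omega n | e <= M (prefix om k)]); split => //.
apply/eqP; rewrite eq_le measure_ge0 andbT; apply/lee_addgt0Pr => d d_gt0; rewrite add0e.
have [k ck_lt] := exists_expr_lt (e^-1 * M [::]) rate_bounds d_gt0.
apply: le_trans (le_trans _ (energy_ge_measure_le k e_gt0)) _.
  apply: le_measure; rewrite ?inE //; last by move=> om; apply.
  exact: (measurable_prefix k (fun w => (e <= M w)%R)).
by rewrite lee_fin mulrCA ltW.
Qed.

Lemma ae_qf_Rinf_eq0 : {ae nu, forall om : Omega n, qf ip x (Rinf ip P R0 om) = 0}.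
Proof.
rewrite /prop_near1 /almost_everywhere /=.
change (nu.-negligible (~` [set om : Omega n | qf ip x (Rinf ip P R0 om) = 0])).
have B_null p : nu.-negligible
    (\bigcap_k [set om : Omega n | p.+1%:R^-1 <= M (prefix om k)]).
  by apply: energy_bounded_below_negligible; rewrite invr_gt0 ltr0n.
apply: negligibleS (negligible_bigcup B_null) => om /= qf_neq0.
apply: contrapT => not_B; apply: qf_neq0; apply: qf_Rinf_eq0 => e e_gt0.
have [p _ /(_ p (leqnn p)) /= p_lt] := near_infty_natSinv_lt (PosNum e_gt0).
apply: contrapT => M_ge; apply: not_B; exists p => // k _ /=.
by rewrite leNgt; apply/negP => M_lt; apply: M_ge; exists k; apply: lt_trans p_lt.
Qed.
End EnergyWalk.

Theorem corollary5p4 (R : realType) (H : lmodType R[i]) (ip : H -> H -> R[i])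
  (n : nat) (P : 'I_n.+1 -> H -> H) (R0 : H -> H) (q : 'I_n.+1 -> R) :
  hilbert ip -> (1 <= n)%N ->
  (forall j, orth_proj ip (P j)) -> positive_op ip R0 ->
  (forall j, 0 <= q j) -> \sum_(j < n.+1) q j = 1 ->
  (forall v, in_H0 ip R0 v -> \sum_(j < n.+1) P j v = v) ->
  forall x : H, 0 < qf ip x R0 ->
  forall nu : probability (Omega n) R,
  (forall w : seq 'I_n.+1, nu (cyl w) = (path_prob ip P R0 q x w)%:E) ->
  (forall k : nat,
     (\int[nu]_om (Mn ip P R0 x k om)%:E
        <= ((1 - (n.+1)%:R^-1) ^+ k * qf ip x R0)%:E)%E) /\
  {ae nu, forall om : Omega n, qf ip x (Rinf ip P R0 om) = 0}.
Proof.
move=> [ip_inner H_complete] _ P_proj R0_pos q_ge0 _ splitting x _ nu nu_cyl.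
split=> [k|]; last by have := ae_qf_Rinf_eq0 ip_inner H_complete P_proj R0_pos q_ge0 splitting nu_cyl.
rewrite (integral_Mn ip_inner H_complete P_proj R0_pos nu_cyl) lee_fin.
by have := expected_energy_le ip_inner H_complete P_proj R0_pos q_ge0 splitting x k.
Qed.
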